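(* For each $c\in[0,1]$, the following decision rule is a Bayes decision rule: \[ \delta^{**}_c(\mathbf{y},u)=\begin{cases}1 & \text{if } \sum_{i=1}^{n} w_i^{**} y_i > C^{**},\\ 0 & \text{if } \sum_{i=1}^{n} w_i^{**} y_i < C^{**},\\ u & \text{otherwise},\end{cases} \] where $w_i^{**}=2\log\!\left(\frac{\alpha_i}{\beta_i}\right)$ and $C^{**}=\log\!\left(\frac{1-c}{c}\right)+\sum_{i=1}^{n}\frac{w_i^{**}}{2}$.
   Context: The setting is a crowdsourcing problem with unknown expert accuracies. The unknown quantity is $\theta\in\{0,1\}$, and the observations are expert opinions $\mathbf{Y}=(Y_1,\ldots,Y_n)\in\{0,1\}^n$ together with a fair coin flip $U\sim\text{Bernoulli}(1/2)$ that is independent of $\mathbf{Y}$. The following assumptions hold: - $Y_1,\ldots,Y_n$ are independent conditionally on $(\theta,\gamma_1,\ldots,\gamma_n)$. - $P(Y_i=1\mid\theta=1,\gamma_i)=P(Y_i=0\mid\theta=0,\gamma_i)=\gamma_i$. - $n$ is odd. - The parameter space is $\{(\theta,\gamma_1,\ldots,\gamma_n):\theta\in\{0,1\},\ \gamma_i\in[0,1]\}$. The prior has the following form: - $\theta,\gamma_1,\ldots,\gamma_n$ are independent. - $P(\theta=1)=c$. - $\gamma_i\sim\text{Beta}(\alpha_i,\beta_i)$, with hyperparameters $\alpha_i,\beta_i$ fixed a priori. The loss is $L(\theta,a)=\mathbb{I}(\theta\neq a)$ for $a\in\{0,1\}$. A Bayes decision rule minimizes the expected risk under the prior. *)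

From HB Require Import structures.
From mathcomp Require Import all_boot all_order all_algebra.
From mathcomp Require Import all_classical all_reals all_analysis.
Set Implicit Arguments. Unset Strict Implicit. Unset Printing Implicit Defensive.
Import Order.TTheory GRing.Theory Num.Theory.
Local Open Scope ring_scope.
Local Open Scope classical_set_scope.

Section Crowd.
Variable R : realType.

Definition beta_kernel (a b : R) (x : R) : R := x `^ (a - 1) * (1 - x) `^ (b - 1).

Definition beta_expect (a b : R) (g : R -> R) : R :=
  Rintegral (@lebesgue_measure R) `[0, 1]%classic (fun x => g x * beta_kernel a b x)
  / Rintegral (@lebesgue_measure R) `[0, 1]%classic (beta_kernel a b).

Definition expert_lik (yi th : bool) (g : R) : R := if yi == th then g else 1 - g.

Definition prior_theta (c : R) (th : bool) : R := if th then c else 1 - c.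

(* Bayes risk (expected 0-1 loss under the prior, the model, and U ~ Bernoulli(1/2))
   of a decision rule delta : {0,1}^n x {0,1} -> {0,1}.  The prior on
   (gamma_1,...,gamma_n) is the product of Beta(alpha_i, beta_i); conditional
   independence of the Y_i given (theta, gamma) and prior independence of the
   gamma_i make the joint integral the product of the one-dimensional ones. *)
Definition bayes_risk (n : nat) (c : R) (alpha beta : 'I_n -> R)
    (delta : {ffun 'I_n -> bool} -> bool -> bool) : R :=
  \sum_(th : bool) prior_theta c th *
    \sum_(y : {ffun 'I_n -> bool}) \sum_(u : bool)
      (1 / 2) * (\prod_(i < n) beta_expect (alpha i) (beta i) (expert_lik (y i) th))
      * (th != delta y u)%:R.

Definition is_bayes_rule (n : nat) (c : R) (alpha beta : 'I_n -> R)
    (delta : {ffun 'I_n -> bool} -> bool -> bool) : Prop :=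
  forall delta' : {ffun 'I_n -> bool} -> bool -> bool,
    bayes_risk c alpha beta delta <= bayes_risk c alpha beta delta'.

Definition wstar (n : nat) (alpha beta : 'I_n -> R) (i : 'I_n) : R :=
  2 * ln (alpha i / beta i).

Definition log_odds_inv (c : R) : \bar R :=
  if c == 0 then +oo%E else if c == 1 then -oo%E else (ln ((1 - c) / c))%:E.

Definition Cstar (n : nat) (c : R) (alpha beta : 'I_n -> R) : \bar R :=
  (log_odds_inv c + (\sum_(i < n) wstar alpha beta i / 2)%:E)%E.

Definition delta_star (n : nat) (c : R) (alpha beta : 'I_n -> R)
    (y : {ffun 'I_n -> bool}) (u : bool) : bool :=
  let S := (\sum_(i < n) wstar alpha beta i * (y i)%:R)%:E in
  if (Cstar c alpha beta < S)%E then true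
  else if (S < Cstar c alpha beta)%E then false
  else u.

End Crowd.

From HB Require Import structures.
From mathcomp Require Import all_boot all_order all_algebra.
From mathcomp Require Import all_classical all_reals all_analysis.
From mathcomp Require Import ring lra measurable_realfun.
Import Order.TTheory GRing.Theory Num.Theory.
Import numFieldNormedType.Exports.
Set Implicit Arguments. Unset Strict Implicit. Unset Printing Implicit Defensive.
Local Open Scope classical_set_scope.
Local Open Scope ring_scope.

(* Integrating out gamma_i, expert i agrees with theta with probability
   E[gamma_i], and the Beta moments satisfy beta * E[gamma] = alpha * E[1 - gamma]:
   integrate the derivative of x^alpha (1 - x)^beta over (0, 1), where it
   vanishes at both ends.  Hence P(y | theta = 1) / P(y | theta = 0) =
   prod_i (alpha_i / beta_i)^(2 y_i - 1) = exp (sum_i w_i y_i - sum_i w_i / 2).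
   Comparing this with the prior odds (1 - c) / c, delta** picks, for every
   (y, u), a decision of minimal posterior loss, so it minimises the Bayes risk. *)

Lemma ge0_RintegralZl (d : measure_display) (T : measurableType d) (R : realType)
    (mu : measure T R) (D : set T) (h : T -> R) (k : R) :
  measurable D -> measurable_fun D h -> {in D, forall x, 0 <= h x} -> 0 <= k ->
  Rintegral mu D (fun x => k * h x) = k * Rintegral mu D h.
Proof.
move=> mD mh h_ge0 k_ge0; rewrite /Rintegral.
under eq_integral do rewrite EFinM.
rewrite ge0_integralZl_EFin //; last 2 first.
- by move=> x /mem_set /h_ge0; rewrite lee_fin.
- exact/measurable_EFinP.
have [->|k_gt0] := eqVneq k 0; first by rewrite !mul0e mul0r.
have {k_ge0} {}k_gt0 : 0 < k by rewrite lt_def k_gt0.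
case: (\int[mu]_(x in D) (h x)%:E)%E => [r| |] //=.
- by rewrite gt0_muley ?lte_fin ?mulr0.
- by rewrite gt0_muleNy ?lte_fin ?mulr0.
Qed.

Lemma is_derive_onem_powR (R : realType) (r x : R) : x < 1 ->
  is_derive x 1 (fun y => (1 - y) `^ r) (- (r * (1 - x) `^ (r - 1))).
Proof.
move=> x1; rewrite -[X in is_derive _ _ _ X]mulrN1.
have -> : (fun y => (1 - y) `^ r) = (@powR R)^~ r \o (fun y => 1 - y) by [].
apply: is_derive1_comp; first by apply: is_derive1_powR; rewrite subr_gt0.
by have := @is_deriveB R R R (cst 1) id x 1 0 1 _ _; rewrite sub0r; exact.
Qed.

Lemma powR_onem_powR_cvg0 (R : realType) (p q : R) : 0 < p -> 0 <= q ->
  x `^ p * (1 - x) `^ q @[x --> 0^'+] --> 0.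
Proof.
move=> p0 q0; apply: (@squeeze_cvgr _ _ _ _ (cst 0) (fun x => x `^ p)); last 2 first.
- exact: cvg_cst.
- exact: powR_cvg0.
near=> x.
have x0 : 0 <= x by near: x; exact: nbhs_right_ge.
have x1 : x <= 1 by near: x; exact: nbhs_right_le.
rewrite /= mulr_ge0 ?powR_ge0 //= ler_piMr ?powR_ge0 //.
rewrite -[leRHS](_ : 1 `^ q = 1); last by rewrite powR1.
by apply: (ge0_ler_powR q0); rewrite ?nnegrE; lra.
Unshelve. all: by end_near.
Qed.

Section improper_FTC_01.
Variables (R : realType) (f g F : R -> R) (l0 l1 : R).
Hypotheses (f_ge0 : {in `]0, 1[, forall x, 0 <= f x})
  (g_ge0 : {in `]0, 1[, forall x, 0 <= g x})
  (f_cont : {in `]0, 1[, continuous f}) (g_cont : {in `]0, 1[, continuous g})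
  (F_deriv : {in `]0, 1[, forall x : R, is_derive x (1 : R) F (f x - g x)})
  (F_at0 : F x @[x --> 0^'+] --> l0) (F_at1 : F (1 - x) @[x --> 0^'+] --> l1).

Let mu := @lebesgue_measure R.

Let F_cont x : x \in `]0, 1[ -> {for x, continuous F}.
Proof.
move=> /F_deriv dF; apply/differentiable_continuous/derivable1_diffP.
exact: ex_derive.
Qed.

Lemma segment_integral_FTC u v : 0 < u -> u < v -> v < 1 ->
  (\int[mu]_(x in `[u, v]) (f x)%:E =
   \int[mu]_(x in `[u, v]) (g x)%:E + (F v - F u)%:E)%E.
Proof.
move=> u0 uv v1.
have sub x : x \in `[u, v] -> x \in `]0, 1[.
  by rewrite !in_itv /= => /andP[ux xv]; apply/andP; split; lra.
have sub_oo x : x \in `]u, v[ -> x \in `]0, 1[.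
  by rewrite !in_itv /= => /andP[ux xv]; apply/andP; split; lra.
have within_cont (h : R -> R) : {in `]0, 1[, continuous h} -> {within `[u, v], continuous h}.
  by move=> ch; apply: continuous_in_subspaceT => x /set_mem/sub/ch.
have intf := continuous_compact_integrable (@segment_compact R u v) (within_cont _ f_cont).
have intg := continuous_compact_integrable (@segment_compact R u v) (within_cont _ g_cont).
set I := fine (\int[mu]_(x in `[u, v]) (f x)%:E).
set J := fine (\int[mu]_(x in `[u, v]) (g x)%:E).
have FTC : (I%:E - J%:E = (F v)%:E - (F u)%:E)%E.
  rewrite /I /J !fineK ?(integrable_fin_num _ intf) ?(integrable_fin_num _ intg) //.
  rewrite -(integralB_EFin _ intf intg) //; apply: (@continuous_FTC2 R (f \- g)) => //.
  - apply: within_cont => x x01.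
    by apply: continuousB; [exact: f_cont | exact: g_cont].
  - split.
    + by move=> x /sub_oo /F_deriv dF; exact: ex_derive.
    + by apply: cvg_at_right_filter; apply: F_cont; apply: sub; rewrite in_itv /= lexx ltW.
    + by apply: cvg_at_left_filter; apply: F_cont; apply: sub; rewrite in_itv /= lexx ltW.
  - by move=> x /sub_oo /F_deriv dF; rewrite derive1E derive_val.
rewrite -(fineK (integrable_fin_num _ intf)) // -(fineK (integrable_fin_num _ intg)) //.
move: FTC; rewrite -/I -/J -!EFinB -EFinD => -[FTC]; congr EFin; lra.
Qed.

Let eps n : R := harmonic n / 3.

Let eps_gt0 n : 0 < eps n.
Proof. by rewrite divr_gt0 // harmonic_gt0. Qed.

Let eps_lt_onem n : eps n < 1 - eps n.
Proof.
have : harmonic n <= 1 :> R by rewrite /harmonic /= invf_le1 // ler1n.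
by rewrite /eps; lra.
Qed.

Let eps_cvg : eps n @[n --> \oo] --> 0.
Proof. by rewrite -(mul0r 3^-1); apply: cvgM cvg_harmonic (cvg_cst _). Qed.

Let segment n := `[eps n, 1 - eps n]%classic.

Let segment_nondecreasing : nondecreasing_seq segment.
Proof.
move=> n m nm; apply/subsetPset => x; rewrite /segment /= !in_itv /= => /andP[nx xn].
have : eps m <= eps n.
  by rewrite ler_pM2r ?invr_gt0 // lef_pV2 ?posrE // ler_nat ltnS.
by move=> mn; apply/andP; split; lra.
Qed.

Let bigcup_segment : \bigcup_n segment n = `]0, 1[%classic.
Proof.
apply/seteqP; split => x /=.
  move=> [n _] /=; rewrite /segment /= !in_itv /= => /andP[nx xn].
  by move: (eps_gt0 n) (eps_lt_onem n) => ? ?; apply/andP; split; lra.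
rewrite in_itv /= => /andP[x0 x1].
have m0 : 0 < Num.min x (1 - x) by rewrite lt_min x0 subr_gt0.
have [N _ epsN] := (cvgrPdist_lt _ _).1 eps_cvg _ m0.
exists N => //=; have := epsN N (leqnn N).
rewrite sub0r normrN gtr0_norm // lt_min => /andP[Nx xN].
by rewrite /segment /= in_itv /=; apply/andP; split; lra.
Qed.

Lemma cvg_integral_segment (h : R -> R) :
  {in `]0, 1[, forall x, 0 <= h x} -> {in `]0, 1[, continuous h} ->
  (\int[mu]_(x in segment n) (h x)%:E)%E @[n --> \oo] -->
  (\int[mu]_(x in `]0%R, 1%R[) (h x)%:E)%E.
Proof.
move=> h_ge0 h_cont; rewrite -bigcup_segment.
have mh : measurable_fun (`]0, 1[ : set R) h.
  by apply: open_continuous_measurable_fun; [exact: interval_open | move=> x /set_mem/h_cont].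
apply: ge0_nondecreasing_set_cvg_integral => //.
- by move=> n; exact: measurable_itv.
- move=> n; apply/measurable_EFinP; apply: measurable_funS mh => //.
  by rewrite -bigcup_segment; exact: bigcup_sup.
- move=> n x; rewrite /segment /= in_itv /= => /andP[nx xn]; rewrite lee_fin h_ge0 //.
  by move: (eps_gt0 n) (eps_lt_onem n) => ? ?; rewrite in_itv /=; apply/andP; split; lra.
Qed.

Lemma integral_oo01_FTC :
  (\int[mu]_(x in `]0%R, 1%R[) (f x)%:E =
   \int[mu]_(x in `]0%R, 1%R[) (g x)%:E + (l1 - l0)%:E)%E.
Proof.
have F_eps : F (eps n) @[n --> \oo] --> l0.
  exact: (cvg_at_rightP F 0 l0).1 F_at0 eps (conj eps_gt0 eps_cvg).
have F_onem_eps : F (1 - eps n) @[n --> \oo] --> l1.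
  exact: (cvg_at_rightP (fun x => F (1 - x)) 0 l1).1 F_at1 eps (conj eps_gt0 eps_cvg).
have cvg_rhs : (\int[mu]_(x in segment n) (g x)%:E + (F (1 - eps n) - F (eps n))%:E)%E
    @[n --> \oo] --> (\int[mu]_(x in `]0%R, 1%R[) (g x)%:E + (l1 - l0)%:E)%E.
  apply: cvgeD; first exact: fin_num_adde_defl.
    exact: cvg_integral_segment.
  by apply: cvg_EFin; [exact: nearW | exact: cvgB].
have cvg_lhs := @cvg_integral_segment f f_ge0 f_cont.
have FTC_segment : (fun n => \int[mu]_(x in segment n) (f x)%:E)%E =
    (fun n => \int[mu]_(x in segment n) (g x)%:E + (F (1 - eps n) - F (eps n))%:E)%E.
  apply/funext => n; apply: segment_integral_FTC; [exact: eps_gt0 | exact: eps_lt_onem |].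
  by have := eps_gt0 n; rewrite ltrBlDr ltrDl.
rewrite FTC_segment in cvg_lhs.
by rewrite -(cvg_lim _ cvg_lhs) // (cvg_lim _ cvg_rhs).
Qed.

End improper_FTC_01.

Section beta_moments.
Variables (R : realType) (a b : R).

Let mu := @lebesgue_measure R.

Lemma beta_kernel_ge0 x : 0 <= beta_kernel a b x.
Proof. by rewrite mulr_ge0 ?powR_ge0. Qed.

Lemma beta_expect_ge0 (h : R -> R) :
  {in `[0, 1], forall x, 0 <= h x} -> 0 <= beta_expect a b h.
Proof.
move=> h_ge0; apply: divr_ge0; apply: Rintegral_ge0 => x; rewrite /= in_itv /= => x01.
  by rewrite mulr_ge0 ?beta_kernel_ge0 ?h_ge0 // in_itv.
exact: beta_kernel_ge0.
Qed.

Lemma measurable_beta_kernel : measurable_fun setT (beta_kernel a b).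
Proof.
apply: measurable_funM; first exact: measurable_powR.
by apply: (measurableT_comp (measurable_powR _)); exact: measurable_funB.
Qed.

Lemma continuous_beta_kernel : {in `]0, 1[, continuous (beta_kernel a b)}.
Proof.
move=> x; rewrite in_itv /= => /andP[x0 x1].
apply/differentiable_continuous/derivable1_diffP.
have -> : beta_kernel a b = (@powR R)^~ (a - 1) * (fun y => (1 - y) `^ (b - 1)) by [].
apply: derivableM.
- by apply: ex_derive; exact: is_derive1_powR.
- by apply: ex_derive; exact: is_derive_onem_powR.
Qed.

Hypotheses (a_gt0 : 0 < a) (b_gt0 : 0 < b).

Let beta_primitive x := x `^ a * (1 - x) `^ b.

Let is_derive_beta_primitive (x : R) : x \in `]0, 1[ ->
  is_derive x (1 : R) beta_primitive
    (a * ((1 - x) * beta_kernel a b x) - b * (x * beta_kernel a b x)).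
Proof.
rewrite in_itv /= => /andP[x0 x1].
have -> : beta_primitive = (@powR R)^~ a * (fun y => (1 - y) `^ b) by [].
apply: is_derive_eq.
  by apply: is_deriveM; [exact: is_derive1_powR | exact: is_derive_onem_powR].
rewrite /beta_kernel -{1}(mulr_powRB1 (ltW x0) a_gt0).
rewrite -{1}(mulr_powRB1 _ b_gt0) ?subr_ge0 ?ltW // /GRing.scale /=.
ring.
Qed.

Lemma integral_beta_kernel_balance :
  (\int[mu]_(x in `[0%R, 1%R]) (b * (x * beta_kernel a b x))%:E =
   \int[mu]_(x in `[0%R, 1%R]) (a * ((1 - x) * beta_kernel a b x))%:E)%E.
Proof.
have closed_open (h : R -> R) : measurable_fun setT h ->
    (\int[mu]_(x in `[0%R, 1%R]) (h x)%:E = \int[mu]_(x in `]0%R, 1%R[) (h x)%:E)%E.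
  move=> /measurable_EFinP mh.
  rewrite -integral_itv_obnd_cbnd; last exact: measurable_funS mh.
  by rewrite -integral_itv_bndo_bndc //; exact: measurable_funS mh.
have mk := measurable_beta_kernel.
rewrite !closed_open; last 2 first.
- by apply: measurable_funM => //; apply: measurable_funM => //; exact: measurable_funB.
- by apply: measurable_funM => //; exact: measurable_funM.
rewrite (@integral_oo01_FTC _ (fun x => a * ((1 - x) * beta_kernel a b x))
  (fun x => b * (x * beta_kernel a b x)) beta_primitive 0 0).
- by rewrite subrr adde0.
- move=> x; rewrite in_itv /= => /andP[_ x1];
  by rewrite mulr_ge0 ?(ltW a_gt0) // mulr_ge0 ?beta_kernel_ge0 // subr_ge0 ltW.
- move=> x; rewrite in_itv /= => /andP[x0 _];
  by rewrite mulr_ge0 ?(ltW b_gt0) // mulr_ge0 ?beta_kernel_ge0 ?ltW.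
- move=> x x01; apply: cvgM; first exact: cvg_cst.
  by apply: cvgM; [apply: cvgB; [exact: cvg_cst | exact: cvg_id] | exact: continuous_beta_kernel].
- move=> x x01; apply: cvgM; first exact: cvg_cst.
  by apply: cvgM; [exact: cvg_id | exact: continuous_beta_kernel].
- exact: is_derive_beta_primitive.
- exact: powR_onem_powR_cvg0 (ltW b_gt0).
- have -> : (fun x => beta_primitive (1 - x)) = fun x => x `^ b * (1 - x) `^ a.
    by apply/funext => x; rewrite /beta_primitive subKr mulrC.
  exact: powR_onem_powR_cvg0 (ltW a_gt0).
Qed.

Lemma beta_expect_odds : b * beta_expect a b id = a * beta_expect a b (fun g => 1 - g).
Proof.
have mD : measurable (`[0, 1] : set R) by exact: measurable_itv.
have mk : measurable_fun (`[0, 1] : set R) (beta_kernel a b).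
  exact: measurable_funS measurable_beta_kernel.
rewrite /beta_expect !mulrA; congr (_ / _).
rewrite -!ge0_RintegralZl ?ltW //; first by rewrite /Rintegral integral_beta_kernel_balance.
- by apply: measurable_funM => //; exact: measurable_funB.
- by move=> x /set_mem; rewrite /= in_itv /= => /andP[_ x1]; rewrite mulr_ge0 ?beta_kernel_ge0 ?subr_ge0.
- exact: measurable_funM.
- by move=> x /set_mem; rewrite /= in_itv /= => /andP[x0 _]; rewrite mulr_ge0 ?beta_kernel_ge0.
Qed.

End beta_moments.

Lemma expert_lik_ge0 (R : realType) yi th (x : R) :
  x \in `[0, 1] -> 0 <= expert_lik yi th x.
Proof. by rewrite in_itv /= /expert_lik => /andP[x0 x1]; case: ifP; lra. Qed.

Lemma beta_expect_expert_lik (R : realType) (a b : R) yi th :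
  beta_expect a b (expert_lik yi th) =
  if yi == th then beta_expect a b id else beta_expect a b (fun g => 1 - g).
Proof. by rewrite /expert_lik; case: (yi == th). Qed.

Lemma beta_expect_expert_lik_ratio (R : realType) (a b : R) yi : 0 < a -> 0 < b ->
  beta_expect a b (expert_lik yi true) =
  beta_expect a b (expert_lik yi false) * expR (2 * ln (a / b) * yi%:R - ln (a / b)).
Proof.
move=> a_gt0 b_gt0; have odds := beta_expect_odds a_gt0 b_gt0.
have ab_gt0 : 0 < a / b by rewrite divr_gt0.
rewrite !beta_expect_expert_lik; case: yi => /=.
- rewrite mulr1 (_ : 2 * ln (a / b) - ln (a / b) = ln (a / b)); last by ring.
  rewrite lnK ?posrE //; apply: (mulfI (lt0r_neq0 b_gt0)); rewrite odds.
  by field; exact: lt0r_neq0.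
- rewrite mulr0 sub0r expRN lnK ?posrE // invf_div.
  apply: (mulfI (lt0r_neq0 a_gt0)); rewrite -odds.
  by field; exact: lt0r_neq0.
Qed.

Lemma log_odds_inv_le (R : realType) (c t : R) : 0 <= c <= 1 ->
  (log_odds_inv c <= t%:E)%E -> 1 - c <= c * expR t.
Proof.
move=> /andP[c0 c1]; rewrite /log_odds_inv.
have [//|c_neq0] := eqVneq c 0.
have [-> _|c_neq1] := eqVneq c 1; first by rewrite subrr mul1r expR_ge0.
have c_gt0 : 0 < c by rewrite lt_def c_neq0.
have c_lt1 : c < 1 by rewrite lt_def eq_sym c_neq1.
rewrite lee_fin -[_ <= t]ler_expR lnK ?posrE ?divr_gt0 ?subr_gt0 //.
by rewrite ler_pdivrMr // mulrC.
Qed.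

Lemma le_log_odds_inv (R : realType) (c t : R) : 0 <= c <= 1 ->
  (t%:E <= log_odds_inv c)%E -> c * expR t <= 1 - c.
Proof.
move=> /andP[c0 c1]; rewrite /log_odds_inv.
have [-> _|c_neq0] := eqVneq c 0; first by rewrite mul0r subr0.
have [//|c_neq1] := eqVneq c 1.
have c_gt0 : 0 < c by rewrite lt_def c_neq0.
have c_lt1 : c < 1 by rewrite lt_def eq_sym c_neq1.
rewrite lee_fin -[t <= _]ler_expR lnK ?posrE ?divr_gt0 ?subr_gt0 //.
by rewrite ler_pdivlMr // mulrC.
Qed.

Section bayes_decision.
Variables (R : realType) (n : nat) (c : R) (alpha beta : 'I_n -> R).

Definition marginal_lik (y : {ffun 'I_n -> bool}) th :=
  \prod_(i < n) beta_expect (alpha i) (beta i) (expert_lik (y i) th).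

(* Unnormalised: P(Y = y, theta <> d) under the prior. *)
Definition posterior_loss (y : {ffun 'I_n -> bool}) (d : bool) :=
  if d then (1 - c) * marginal_lik y false else c * marginal_lik y true.

Definition log_lik_ratio (y : {ffun 'I_n -> bool}) :=
  \sum_(i < n) wstar alpha beta i * (y i)%:R - \sum_(i < n) wstar alpha beta i / 2.

Lemma bayes_riskE delta : bayes_risk c alpha beta delta =
  \sum_y \sum_(u : bool) 1 / 2 * posterior_loss y (delta y u).
Proof.
rewrite /bayes_risk big_bool /= !mulr_sumr -big_split /=; apply: eq_bigr => y _.
rewrite !mulr_sumr -big_split /=; apply: eq_bigr => u _.
by rewrite /posterior_loss /marginal_lik; case: (delta y u) => /=; ring.
Qed.

Lemma marginal_lik_ge0 y th : 0 <= marginal_lik y th.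
Proof.
by apply: prodr_ge0 => i _; apply: beta_expect_ge0 => x; exact: expert_lik_ge0.
Qed.

Lemma delta_star_log_lik_ratio y u :
  if delta_star c alpha beta y u then (log_odds_inv c <= (log_lik_ratio y)%:E)%E
  else ((log_lik_ratio y)%:E <= log_odds_inv c)%E.
Proof.
rewrite /delta_star /Cstar /log_lik_ratio.
set L := log_odds_inv c; set S := \sum_(i < n) wstar alpha beta i * (y i)%:R.
set W := \sum_(i < n) wstar alpha beta i / 2.
have -> : (L + W%:E < S%:E)%E = (L < (S - W)%:E)%E by rewrite EFinB lteBrDr.
have -> : (S%:E < L + W%:E)%E = ((S - W)%:E < L)%E by rewrite EFinB lteBlDr.
have [/ltW //|] := boolP (L < (S - W)%:E)%E; rewrite -leNgt => le_lik /=.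
have [/ltW //|] := boolP ((S - W)%:E < L)%E; rewrite -leNgt => ge_lik.
by case: u.
Qed.

Hypotheses (alpha_gt0 : forall i, 0 < alpha i) (beta_gt0 : forall i, 0 < beta i).

Lemma marginal_lik_ratio y :
  marginal_lik y true = marginal_lik y false * expR (log_lik_ratio y).
Proof.
rewrite /marginal_lik /log_lik_ratio -sumrB expR_sum -big_split /=.
apply: eq_bigr => i _.
rewrite (_ : wstar alpha beta i / 2 = ln (alpha i / beta i)); last by rewrite /wstar; field.
exact: beta_expect_expert_lik_ratio.
Qed.

Lemma posterior_loss_delta_star y u d : 0 <= c <= 1 ->
  posterior_loss y (delta_star c alpha beta y u) <= posterior_loss y d.
Proof.
move=> c01; have := delta_star_log_lik_ratio y u.
have L0_ge0 := marginal_lik_ge0 y false.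
rewrite /posterior_loss marginal_lik_ratio.
case: (delta_star _ _ _ _ _) => [/(log_odds_inv_le c01)|/(le_log_odds_inv c01)]; case: d => //.
all: by move=> ?; nra.
Qed.

End bayes_decision.

Theorem theorem6 (R : realType) (n : nat) (alpha beta : 'I_n -> R) (c : R) :
  odd n ->
  (forall i, 0 < alpha i) -> (forall i, 0 < beta i) ->
  0 <= c <= 1 ->
  is_bayes_rule c alpha beta (delta_star c alpha beta).
Proof.
move=> _ alpha_gt0 beta_gt0 c01 delta.
rewrite !bayes_riskE; apply: ler_sum => y _; apply: ler_sum => u _.
by rewrite ler_pM2l // posterior_loss_delta_star.
Qed.
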